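(* In the Setting below, let $V_{2i}$ and $V_{2j}$ be two (possibly equal) of the $2$-dimensional summands of $J_{\mathcal M}$, with bases $\{u_i,v_i\}$ and $\{u_j,v_j\}$ satisfying $uH=u$, $vH=-v$, $uE=v$, $uF=0$, $vE=0$, $vF=-u$. Then $(u_iu_j)E=-u_iv_j$, $(u_iv_j)E=-\tfrac12 v_iv_j$, $(v_iv_j)E=0$, $(u_iu_j)F=0$, $(u_iv_j)F=\tfrac12 u_iu_j$, $(v_iv_j)F=u_iv_j$, $(u_iu_j)H=-u_iu_j$, $(u_iv_j)H=0$, $(v_iv_j)H=v_iv_j$, and $u_iv_j=v_iu_j$. Moreover $J(xy,a,b)=0$ for all $x,y\in J_{\mathcal M}$ and $a,b\in L$ (so $J_{\mathcal M}^2$ is a Lie $L$-module), and if $i=j$ then $V_{2i}V_{2i}=0$.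
   Context: Setting. Let $\mathbb F$ be a field of characteristic different from $2$ and $3$. A Malcev algebra is an anticommutative algebra $\mathcal M$ over $\mathbb F$ satisfying $(xz)(yt)=((xy)z)t+((yz)t)x+((zt)x)y+((tx)y)z$. Products are left-normed: $xyz=(xy)z$, $xyzt=((xy)z)t$. Put $J(x,y,z)=xyz+yzx+zxy$ (the Jacobian), $\{x,y,z\}=xyz-xzy+2x(yz)$, and $h(y,z,t,x,u)=\{yz,t,u\}x+\{yz,t,x\}u+\{yx,z,u\}t+\{yu,z,x\}t$. The variety $\mathcal H$ consists of the Malcev algebras satisfying $h(y,z,t,x,u)=0$ identically. Let $L=\mathfrak{sl}_2(\mathbb F)$ with basis $E,H,F$ and products $EH=E$, $FH=-F$, $EF=\tfrac12 H$. Standing assumption: $\mathcal M\in\mathcal H$ contains $L$ as a subalgebra and $mL\neq 0$ for every $0\neq m\in\mathcal M$. Define $N_{\mathcal M}=\{m\in\mathcal M: J(m,a,b)=0\ \forall a,b\in L\}$ and $J_{\mathcal M}=\{m\in\mathcal M:\{m,a,b\}=0\ \forall a,b\in L\}$. Known facts (from prior work): $\mathcal M=N_{\mathcal M}\oplus J_{\mathcal M}$; $J_{\mathcal M}$ is a direct sum of $L$-submodules $V_{2i}$, each with a basis $\{u_i,v_i\}$ satisfying $u_iH=u_i$, $v_iH=-v_i$, $u_iE=v_i$, $u_iF=0$, $v_iE=0$, $v_iF=-u_i$. *)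

From mathcomp Require Import all_boot all_order all_algebra.
Set Implicit Arguments. Unset Strict Implicit. Unset Printing Implicit Defensive.
Import GRing.Theory.
Local Open Scope ring_scope.

Section Defs.
Variables (F : fieldType) (M : lmodType F) (mul : M -> M -> M).
Local Notation "x ** y" := (mul x y) (at level 40, left associativity).

Definition bilinear_prod : Prop :=
  (forall (a : F) x y z, (a *: x + y) ** z = a *: (x ** z) + y ** z) /\
  (forall (a : F) x y z, z ** (a *: x + y) = a *: (z ** x) + z ** y).

Definition anticomm : Prop := forall x, x ** x = 0.

Definition malcev_identity : Prop :=
  forall x y z t,
    (x ** z) ** (y ** t) =
    x ** y ** z ** t + y ** z ** t ** x + z ** t ** x ** y + t ** x ** y ** z.

Definition malcev : Prop := bilinear_prod /\ anticomm /\ malcev_identity.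

Definition jacobian (x y z : M) : M := x ** y ** z + y ** z ** x + z ** x ** y.

Definition trip (x y z : M) : M := x ** y ** z - x ** z ** y + (x ** (y ** z)) *+ 2.

Definition hpoly (y z t x u : M) : M :=
  trip (y ** z) t u ** x + trip (y ** z) t x ** u
  + trip (y ** x) z u ** t + trip (y ** u) z x ** t.

Definition in_variety_H : Prop :=
  malcev /\ forall y z t x u, hpoly y z t x u = 0.

Definition is_sl2 (e h f : M) : Prop :=
  (forall a b c : F, a *: e + b *: h + c *: f = 0 -> [/\ a = 0, b = 0 & c = 0]) /\
  [/\ e ** h = e, f ** h = - f & e ** f = (2%:R : F)^-1 *: h].

Definition in_span3 (e h f a : M) : Prop :=
  exists al be ga : F, a = al *: e + be *: h + ga *: f.

Definition in_N (e h f m : M) : Prop :=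
  forall a b, in_span3 e h f a -> in_span3 e h f b -> jacobian m a b = 0.

Definition in_J (e h f m : M) : Prop :=
  forall a b, in_span3 e h f a -> in_span3 e h f b -> trip m a b = 0.

Definition std_pair (e h f u v : M) : Prop :=
  [/\ u ** h = u, v ** h = - v & u ** e = v] /\ [/\ u ** f = 0, v ** e = 0 & v ** f = - u].

Definition in_span2 (u v x : M) : Prop := exists a b : F, x = a *: u + b *: v.

End Defs.

(* Let M in H contain L = sl_2 = <E, H, F>, with M = N_M (+) J_M, and let
   D_{a,b}(x) := x(ab) - (xb)a + (xa)b.  In any Malcev algebra D_{a,b} is a
   derivation; on J_M it acts as x |-> -x(ab) and on N_M as n |-> 2 n(ab).
   The proof goes as follows.
   1. A reflexive normalizer expands expressions in a bilinear
      anticommutative product into oriented nonassociative monomials and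
      reduces an identity to scalar equations between their coefficients;
      combined with instances of the Malcev identity it does all the
      polynomial bookkeeping below.
   2. The derivation identity and the actions of D on N_M and J_M give: if
      x, y in J_M have H-weights al, be with al+be <> +-1, then xy in N_M.
      Indeed the J-component m of xy would be an H-eigenvector of J_M of
      weight al+be, while (mH)H = m for every m in J_M.
   3. All weights in J_M are +-1 and 2, 3 are invertible, so J_M J_M lies in
      N_M; then D_{a,b}(xy) = 2(xy)(ab) yields the action of E, F, H on the
      products u_i u_j, u_i v_j, v_i v_j, and one Malcev identity gives
      u_i v_j = v_i u_j, hence V_{2i} V_{2i} = 0. *)
From mathcomp Require Import all_boot all_order all_algebra.
From mathcomp Require Import ring.
Set Implicit Arguments. Unset Strict Implicit. Unset Printing Implicit Defensive.
Import GRing.Theory.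
Local Open Scope ring_scope.

Section AnticommutativeProduct.
Variables (F : fieldType) (M : lmodType F) (mul : M -> M -> M).
Hypothesis bil : bilinear_prod mul.
Hypothesis ac : anticomm mul.

Lemma prod0l z : mul 0 z = 0.
Proof.
have := bil.1 1 0 0 z; rewrite !scale1r addr0 => h.
by apply: (addrI (mul 0 z)); rewrite addr0 -h.
Qed.
Lemma prod0r z : mul z 0 = 0.
Proof.
have := bil.2 1 0 0 z; rewrite !scale1r addr0 => h.
by apply: (addrI (mul z 0)); rewrite addr0 -h.
Qed.
Lemma prodDl x y z : mul (x + y) z = mul x z + mul y z.
Proof. by have := bil.1 1 x y z; rewrite !scale1r. Qed.
Lemma prodDr x y z : mul z (x + y) = mul z x + mul z y.
Proof. by have := bil.2 1 x y z; rewrite !scale1r. Qed.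
Lemma prodZl a x z : mul (a *: x) z = a *: mul x z.
Proof. by have := bil.1 a x 0 z; rewrite !addr0 prod0l addr0. Qed.
Lemma prodZr a x z : mul z (a *: x) = a *: mul z x.
Proof. by have := bil.2 a x 0 z; rewrite !addr0 prod0r addr0. Qed.
Lemma prodNl x z : mul (- x) z = - mul x z.
Proof. by rewrite -scaleN1r prodZl scaleN1r. Qed.
Lemma prodNr x z : mul z (- x) = - mul z x.
Proof. by rewrite -scaleN1r prodZr scaleN1r. Qed.

Lemma prodC x y : mul x y = - mul y x.
Proof.
have := ac (x + y); rewrite prodDl !prodDr !ac add0r addr0 => /eqP.
by rewrite addr_eq0 => /eqP.
Qed.

Lemma prod_suml (T : Type) (s : seq T) (f : T -> M) y :
  mul (\sum_(k <- s) f k) y = \sum_(k <- s) mul (f k) y.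
Proof. by elim: s => [|k s IH]; rewrite ?big_nil ?prod0l // !big_cons prodDl IH. Qed.
Lemma prod_sumr (T : Type) (s : seq T) (f : T -> M) y :
  mul y (\sum_(k <- s) f k) = \sum_(k <- s) mul y (f k).
Proof. by elim: s => [|k s IH]; rewrite ?big_nil ?prod0r // !big_cons prodDr IH. Qed.

Inductive term := TVar of nat | TZero | TAdd of term & term | TOpp of term
  | TScale of F & term | TMul of term & term | TNat of term & nat.
Fixpoint eval (env : seq M) t : M :=
  match t with
  | TVar n => nth 0 env n | TZero => 0 | TAdd a b => eval env a + eval env b
  | TOpp a => - eval env a | TScale c a => c *: eval env a
  | TMul a b => mul (eval env a) (eval env b) | TNat a k => eval env a *+ k
  end.

(* Nonassociative monomials, with a decidable equality and a total strict
   order used to orient products (xy = -yx, xx = 0). *)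
Inductive mono := MVar of nat | MMul of mono & mono.
Fixpoint eval_mono env m : M :=
  match m with MVar n => nth 0 env n | MMul a b => mul (eval_mono env a) (eval_mono env b) end.
Fixpoint mono_eqb a b : bool :=
  match a, b with
  | MVar n, MVar k => Nat.eqb n k
  | MMul a1 a2, MMul b1 b2 => mono_eqb a1 b1 && mono_eqb a2 b2
  | _, _ => false
  end.
Lemma mono_eqbP a b : mono_eqb a b -> a = b.
Proof.
elim: a b => [n|a1 IH1 a2 IH2] [k|b1 b2] //=.
- by move/PeanoNat.Nat.eqb_eq ->.
- by case/andP => /IH1 -> /IH2 ->.
Qed.
Fixpoint mono_ltb a b : bool :=
  match a, b with
  | MVar n, MVar k => Nat.ltb n k
  | MVar _, MMul _ _ => true | MMul _ _, MVar _ => false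
  | MMul a1 a2, MMul b1 b2 => if mono_eqb a1 b1 then mono_ltb a2 b2 else mono_ltb a1 b1
  end.

Definition nform := seq (F * mono).
Fixpoint eval_nf env (p : nform) : M :=
  match p with [::] => 0 | x :: q => x.1 *: eval_mono env x.2 + eval_nf env q end.
Definition mono_mul (x y : F * mono) : F * mono :=
  if mono_eqb x.2 y.2 then (0, x.2)
  else if mono_ltb x.2 y.2 then (x.1 * y.1, MMul x.2 y.2)
  else (- (x.1 * y.1), MMul y.2 x.2).
Fixpoint nf_scale (c : F) (p : nform) : nform :=
  match p with [::] => [::] | x :: r => (c * x.1, x.2) :: nf_scale c r end.
Definition nf_mul (p q : nform) : nform :=
  flatten [seq [seq mono_mul x y | y <- q] | x <- p].
Fixpoint normalize t : nform :=
  match t with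
  | TVar n => [:: (1, MVar n)] | TZero => [::] | TAdd a b => normalize a ++ normalize b
  | TOpp a => nf_scale (-1) (normalize a) | TScale c a => nf_scale c (normalize a)
  | TNat a k => nf_scale (k%:R) (normalize a) | TMul a b => nf_mul (normalize a) (normalize b)
  end.

Lemma eval_nf_cat env p q : eval_nf env (p ++ q) = eval_nf env p + eval_nf env q.
Proof. by elim: p => [|x p IH] /=; rewrite ?add0r // IH addrA. Qed.
Lemma eval_nf_scale env c p : eval_nf env (nf_scale c p) = c *: eval_nf env p.
Proof. by elim: p => [|x p IH] /=; rewrite ?scaler0 // IH scalerDr scalerA. Qed.
Lemma eval_mono_mul env x y :
  (mono_mul x y).1 *: eval_mono env (mono_mul x y).2
  = mul (x.1 *: eval_mono env x.2) (y.1 *: eval_mono env y.2).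
Proof.
rewrite /mono_mul prodZl prodZr scalerA; case: ifP => [/mono_eqbP ->|_] /=.
  by rewrite ac scaler0 scale0r.
by case: ifP => _ //=; rewrite scaleNr -scalerN -prodC.
Qed.
Lemma eval_nf_mul1 env x q :
  eval_nf env [seq mono_mul x y | y <- q] = mul (x.1 *: eval_mono env x.2) (eval_nf env q).
Proof. by elim: q => [|y q IH] /=; rewrite ?prod0r // prodDr IH eval_mono_mul. Qed.
Lemma eval_nf_mul env p q : eval_nf env (nf_mul p q) = mul (eval_nf env p) (eval_nf env q).
Proof.
elim: p => [|x p IH] /=; first by rewrite prod0l.
by rewrite /nf_mul /= eval_nf_cat -/(nf_mul p q) IH prodDl eval_nf_mul1.
Qed.
Lemma eval_normalize env t : eval_nf env (normalize t) = eval env t.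
Proof.
elim: t => [n||a IHa b IHb|a IH|c a IH|a IHa b IHb|a IH k] /=.
- by rewrite scale1r addr0.
- by [].
- by rewrite eval_nf_cat IHa IHb.
- by rewrite eval_nf_scale IH scaleN1r.
- by rewrite eval_nf_scale IH.
- by rewrite eval_nf_mul IHa IHb.
- by rewrite eval_nf_scale IH scaler_nat.
Qed.

Fixpoint coef_of m (q : nform) : F :=
  match q with
  | [::] => 0
  | x :: r => if mono_eqb m x.2 then x.1 + coef_of m r else coef_of m r
  end.
Fixpoint drop_mono m (q : nform) : nform :=
  match q with
  | [::] => [::]
  | x :: r => if mono_eqb m x.2 then drop_mono m r else x :: drop_mono m r
  end.
Lemma eval_nf_split env m q :
  eval_nf env q = coef_of m q *: eval_mono env m + eval_nf env (drop_mono m q).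
Proof.
elim: q => [|x q IH] /=; first by rewrite scale0r addr0.
case: ifP => [/mono_eqbP <-|_] /=; rewrite IH; first by rewrite scalerDl addrA.
by rewrite addrCA.
Qed.
(* [gather f p] merges the coefficients of equal monomials (f is fuel). *)
Fixpoint gather (f : nat) (p : nform) : nform :=
  match f, p with
  | _, [::] => [::] | 0, _ => p
  | f'.+1, x :: q => (x.1 + coef_of x.2 q, x.2) :: gather f' (drop_mono x.2 q)
  end.
Lemma eval_gather env f p : eval_nf env (gather f p) = eval_nf env p.
Proof.
elim: f p => [|f IH] [|x q] //=.
by rewrite IH [in RHS](eval_nf_split env x.2 q) scalerDl addrA.
Qed.
Fixpoint all_zero (p : nform) : Prop :=
  match p with [::] => True | x :: q => x.1 = 0 /\ all_zero q end.
Lemma eval_all_zero env p : all_zero p -> eval_nf env p = 0.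
Proof. by elim: p => [|x p IH] //= [-> /IH ->]; rewrite scale0r addr0. Qed.

Lemma normalize_zero env t :
  all_zero (gather (size (normalize t)) (normalize t)) -> eval env t = 0.
Proof. by move/(eval_all_zero env); rewrite eval_gather eval_normalize. Qed.

Lemma add_relation (l r : M) (h : l = r) (c : F) (x y : M) : x + c *: (l - r) = y -> x = y.
Proof. by rewrite h subrr scaler0 addr0. Qed.
End AnticommutativeProduct.
Arguments add_relation {F M l r} h c {x y}.

Ltac inenv x env := lazymatch env with
  | nil => constr:(false)
  | x :: _ => constr:(true)
  | _ :: ?r => inenv x r end.
Ltac lookup x env := lazymatch env with
  | x :: _ => constr:(0%N)
  | _ :: ?r => let n := lookup x r in constr:(S n) end.
Ltac collect mul t env := lazymatch t with
  | ?a + ?b => let e := collect mul a env in collect mul b e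
  | - ?a => collect mul a env
  | ?c *: ?a => collect mul a env
  | ?a *+ ?k => collect mul a env
  | 0 => env
  | mul ?a ?b => let e := collect mul a env in collect mul b e
  | _ => let b := inenv t env in
         lazymatch b with true => env | false => constr:(t :: env) end
  end.
Ltac reify F mul env t := lazymatch t with
  | ?a + ?b => let x := reify F mul env a in let y := reify F mul env b in constr:(@TAdd F x y)
  | - ?a => let x := reify F mul env a in constr:(@TOpp F x)
  | ?c *: ?a => let x := reify F mul env a in constr:(@TScale F c x)
  | ?a *+ ?k => let x := reify F mul env a in constr:(@TNat F x k)
  | 0 => constr:(@TZero F)
  | mul ?a ?b => let x := reify F mul env a in let y := reify F mul env b in constr:(@TMul F x y)
  | _ => let n := lookup t env in constr:(@TVar F n)
  end.
(* [anticomm_ring F mul bil ac] reduces an equation [x = y] between expressions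
   in a bilinear anticommutative product to a list of scalar equations
   (the gathered coefficients of x - y), most of which close by computation;
   the remaining ones are left to [ring]/[field]. *)
Ltac anticomm_ring F mul bil ac :=
  apply: subr0_eq;
  lazymatch goal with |- ?t = 0 =>
    let T := type of t in let env := collect mul t (@nil T) in
    let s := reify F mul env t in
    change (eval mul env s = 0); apply: (normalize_zero bil ac);
    cbn -[GRing.add GRing.opp GRing.mul GRing.zero GRing.one GRing.inv GRing.natmul];
    repeat split
  end.

Section MalcevIdentities.
Variables (F : fieldType) (M : lmodType F) (mul : M -> M -> M).
Hypothesis bil : bilinear_prod mul.
Hypothesis ac : anticomm mul.
Hypothesis mal : malcev_identity mul.

Definition der (a b x : M) : M := mul x (mul a b) - mul (mul x b) a + mul (mul x a) b.

Local Ltac acring := anticomm_ring F mul bil ac.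

(* A linearization of the Malcev identity (Sagle):
   J(x,y,wz) + J(w,y,xz) = J(x,y,z)w + J(w,y,z)x. *)
Lemma jacobian_prod x y w z :
  jacobian mul x y (mul w z) + jacobian mul w y (mul x z)
  = mul (jacobian mul x y z) w + mul (jacobian mul w y z) x.
Proof.
rewrite /jacobian; apply: (add_relation (mal x y z w) (-1)).
by apply: (add_relation (mal x w y z) (-1)); acring; ring.
Qed.

Lemma der_prod a b x y : der a b (mul x y) = mul (der a b x) y + mul x (der a b y).
Proof.
rewrite /der; apply: (add_relation (mal x y b a) (-1)).
apply: (add_relation (mal x a y b) (-1)); apply: (add_relation (mal x a b y) (-1)).
by acring; ring.
Qed.
End MalcevIdentities.

Section Sl2Modules.
Variables (F : fieldType) (M : lmodType F) (mul : M -> M -> M) (E H Fe : M).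
Variables (I : eqType) (U V : I -> M).
Hypothesis two : (2%:R : F) != 0.
Hypothesis three : (3%:R : F) != 0.
Hypothesis bil : bilinear_prod mul.
Hypothesis ac : anticomm mul.
Hypothesis mal : malcev_identity mul.
Hypothesis EH : mul E H = E.
Hypothesis FH : mul Fe H = - Fe.
Hypothesis EF : mul E Fe = (2%:R : F)^-1 *: H.
Local Notation inN := (in_N mul E H Fe).
Local Notation inJ := (in_J mul E H Fe).
Local Notation inL := (in_span3 E H Fe).
Local Notation D := (der mul).
Hypothesis decomp : forall m, exists n x, [/\ inN n, inJ x & m = n + x].
Hypothesis NJ0 : forall m, inN m -> inJ m -> m = 0.
Hypothesis UVJ : forall k, inJ (U k) /\ inJ (V k).
Hypothesis std : forall k, std_pair mul E H Fe (U k) (V k).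
Hypothesis span : forall x, inJ x ->
  exists (s : seq I) (a b : I -> F), x = \sum_(k <- s) (a k *: U k + b k *: V k).

Local Ltac acring := anticomm_ring F mul bil ac.
Local Ltac acfield := acring; field; try exact: two; try exact: three.
Local Notation prodDl := (prodDl bil). Local Notation prodDr := (prodDr bil).
Local Notation prodZl := (prodZl bil). Local Notation prodZr := (prodZr bil).
Local Notation prodNl := (prodNl bil). Local Notation prodNr := (prodNr bil).
Local Notation prod0l := (prod0l bil). Local Notation prod0r := (prod0r bil).
Local Notation prodC := (prodC bil ac).

Lemma mulHE : mul H E = - E. Proof. by rewrite prodC EH. Qed.
Lemma mulHF : mul H Fe = Fe. Proof. by rewrite prodC FH opprK. Qed.
Lemma mulFE : mul Fe E = - ((2%:R : F)^-1 *: H). Proof. by rewrite prodC EF. Qed.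

Lemma inL_E : inL E. Proof. by exists 1, 0, 0; rewrite scale1r !scale0r !addr0. Qed.
Lemma inL_H : inL H. Proof. by exists 0, 1, 0; rewrite scale1r !scale0r add0r addr0. Qed.
Lemma inL_F : inL Fe. Proof. by exists 0, 0, 1; rewrite scale1r !scale0r !add0r. Qed.

Local Ltac sl2_expand := rewrite ?(prodDl, prodDr, prodZl, prodZr, prodNl, prodNr,
  EH, FH, EF, mulHE, mulHF, mulFE, ac).

Lemma inL_mulH a : inL a -> inL (mul a H).
Proof. by case=> al [be [ga ->]]; exists al, 0, (- ga); sl2_expand; acring; ring. Qed.

Lemma jacobian_L_H a b : inL a -> inL b -> jacobian mul a b H = 0.
Proof.
case=> al [be [ga ->]]; case=> al' [be' [ga' ->]].
by rewrite /jacobian; sl2_expand; acring; ring.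
Qed.

Lemma inN0 : inN 0.
Proof. by move=> a b _ _; rewrite /jacobian ?(prod0l, prod0r) !addr0. Qed.
Lemma inND x y : inN x -> inN y -> inN (x + y).
Proof.
move=> hx hy a b ha hb; move: (hx a b ha hb) (hy a b ha hb); rewrite /jacobian => h1 h2.
by apply: (add_relation h1 (-1)); apply: (add_relation h2 (-1)); acring; ring.
Qed.
Lemma inNZ c x : inN x -> inN (c *: x).
Proof.
move=> hx a b ha hb; move: (hx a b ha hb); rewrite /jacobian => h1.
by apply: (add_relation h1 (- c)); acring; ring.
Qed.
Lemma inJ0 : inJ 0.
Proof. by move=> a b _ _; rewrite /trip ?(prod0l, prod0r) mul0rn subrr addr0. Qed.
Lemma inJD x y : inJ x -> inJ y -> inJ (x + y).
Proof.
move=> hx hy a b ha hb; move: (hx a b ha hb) (hy a b ha hb); rewrite /trip => h1 h2.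
by apply: (add_relation h1 (-1)); apply: (add_relation h2 (-1)); acring; ring.
Qed.
Lemma inJZ c x : inJ x -> inJ (c *: x).
Proof.
move=> hx a b ha hb; move: (hx a b ha hb); rewrite /trip => h1.
by apply: (add_relation h1 (- c)); acring; ring.
Qed.

Lemma inN_mulH n : inN n -> inN (mul n H).
Proof.
move=> hn a b ha hb; have := jacobian_prod bil ac mal a b n H.
rewrite (hn b (mul a H) hb (inL_mulH ha)) (hn b H hb inL_H) (jacobian_L_H ha hb).
rewrite !prod0l addr0 /jacobian => h.
by apply: (add_relation h (-1)); acring; ring.
Qed.

Lemma der_J x a b : inJ x -> inL a -> inL b -> D a b x = - mul x (mul a b).
Proof.
move=> hx ha hb; have := hx a b ha hb; rewrite /trip /der => h.
by apply: (add_relation h (-1)); acring; ring.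
Qed.
Lemma der_N n a b : inN n -> inL a -> inL b -> D a b n = mul n (mul a b) *+ 2.
Proof.
move=> hn ha hb; have := hn a b ha hb; rewrite /jacobian /der => h.
by apply: (add_relation h (-1)); acring; ring.
Qed.

Lemma der_prod_N x y a b : inJ x -> inJ y -> inN (mul x y) -> inL a -> inL b ->
  mul (mul x y) (mul a b) *+ 2 = - mul (mul x (mul a b)) y - mul x (mul y (mul a b)).
Proof.
move=> hx hy hn ha hb.
by rewrite -(der_N hn ha hb) der_prod // (der_J hx ha hb) (der_J hy ha hb) prodNl prodNr.
Qed.

Lemma prodN_mulE x y : inJ x -> inJ y -> inN (mul x y) ->
  mul (mul x y) E = - ((2%:R : F)^-1 *: (mul (mul x E) y + mul x (mul y E))).
Proof.
move=> hx hy hn; have := der_prod_N hx hy hn inL_E inL_H; rewrite EH => h.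
by apply: (add_relation h (- (2%:R : F)^-1)); acfield.
Qed.
Lemma prodN_mulF x y : inJ x -> inJ y -> inN (mul x y) ->
  mul (mul x y) Fe = - ((2%:R : F)^-1 *: (mul (mul x Fe) y + mul x (mul y Fe))).
Proof.
move=> hx hy hn; have := der_prod_N hx hy hn inL_F inL_H; rewrite FH => h.
by apply: (add_relation h ((2%:R : F)^-1)); acfield.
Qed.
Lemma prodN_mulH x y : inJ x -> inJ y -> inN (mul x y) ->
  mul (mul x y) H = - ((2%:R : F)^-1 *: (mul (mul x H) y + mul x (mul y H))).
Proof.
move=> hx hy hn; have := der_prod_N hx hy hn inL_E inL_F; rewrite EF => h.
by apply: (add_relation h (-1)); acfield.
Qed.

Lemma U_H k : mul (U k) H = U k. Proof. by case: (std k) => [[]]. Qed.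
Lemma V_H k : mul (V k) H = - V k. Proof. by case: (std k) => [[]]. Qed.
Lemma U_E k : mul (U k) E = V k. Proof. by case: (std k) => [[]]. Qed.
Lemma U_F k : mul (U k) Fe = 0. Proof. by case: (std k) => [_ []]. Qed.
Lemma V_E k : mul (V k) E = 0. Proof. by case: (std k) => [_ []]. Qed.
Lemma V_F k : mul (V k) Fe = - U k. Proof. by case: (std k) => [_ []]. Qed.
Lemma U_J k : inJ (U k). Proof. by case: (UVJ k). Qed.
Lemma V_J k : inJ (V k). Proof. by case: (UVJ k). Qed.

Local Notation comb s a b := (\sum_(k <- s) (a k *: U k + b k *: V k)).

Lemma inJ_comb (s : seq I) (a b : I -> F) : inJ (comb s a b).
Proof.
elim: s => [|k s IH]; rewrite ?big_nil ?big_cons; first exact: inJ0.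
by apply: inJD => //; apply: inJD; apply: inJZ; [exact: U_J | exact: V_J].
Qed.

Lemma comb_mulH (s : seq I) (a b : I -> F) :
  mul (comb s a b) H = comb s a (fun k => - b k).
Proof.
rewrite prod_suml //; apply: eq_bigr => k _.
by rewrite prodDl !prodZl U_H V_H scaleNr scalerN.
Qed.

Lemma inJ_mulH m : inJ m -> inJ (mul m H).
Proof. by case/span => s [a [b ->]]; rewrite comb_mulH; exact: inJ_comb. Qed.
Lemma J_mulHH m : inJ m -> mul (mul m H) H = m.
Proof.
case/span => s [a [b ->]]; rewrite !comb_mulH.
by apply: eq_bigr => k _; rewrite opprK.
Qed.

Lemma J_weight_zero m g : inJ m -> mul m H = g *: m ->
  1 - g != 0 -> -1 - g != 0 -> m = 0.
Proof.
move=> hm hH h1 h2.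
have hsq : ((1 - g) * (-1 - g)) *: m = 0.
  have -> : (1 - g) * (-1 - g) = g * g - 1 by ring.
  by rewrite scalerBl scale1r -scalerA -hH -prodZl -hH J_mulHH // subrr.
by move/eqP: hsq; rewrite scaler_eq0 mulf_eq0 (negbTE h1) (negbTE h2) => /eqP.
Qed.

(* Write xy = n + m with n in N_M, m in J_M and apply the
   derivation D_{E,F}: it yields an element of N_M equal to one of J_M, whence
   mH = (al + be) m and m = 0. *)
Lemma prod_in_N x y al be : inJ x -> inJ y -> mul x H = al *: x -> mul y H = be *: y ->
  1 - (al + be) != 0 -> -1 - (al + be) != 0 -> inN (mul x y).
Proof.
move=> hx hy hxH hyH h1 h2; case: (decomp (mul x y)) => n [m [hn hm hP]].
have Dx : D E Fe x = (- ((2%:R : F)^-1 * al)) *: x.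
  by rewrite (der_J hx inL_E inL_F) EF prodZr hxH scalerA scaleNr.
have Dy : D E Fe y = (- ((2%:R : F)^-1 * be)) *: y.
  by rewrite (der_J hy inL_E inL_F) EF prodZr hyH scalerA scaleNr.
have hD := der_prod bil ac mal E Fe x y.
rewrite Dx Dy prodZl prodZr hP in hD.
have DNn := der_N hn inL_E inL_F; have DJm := der_J hm inL_E inL_F.
rewrite /der EF in hD DNn DJm.
pose la := - ((2%:R : F)^-1 * al) + - ((2%:R : F)^-1 * be).
have hNJ : mul n H - la *: n = (2%:R : F)^-1 *: mul m H + la *: m.
  apply: (add_relation hD (-1)); apply: (add_relation DNn 1).
  by apply: (add_relation DJm 1); rewrite /la; acfield.
have hJ0 : (2%:R : F)^-1 *: mul m H + la *: m = 0.
  apply: NJ0; last by apply: inJD; apply: inJZ => //; exact: inJ_mulH.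
  by rewrite -hNJ -scaleNr; apply: inND; [exact: inN_mulH | exact: inNZ].
have mH : mul m H = (al + be) *: m.
  by apply: (add_relation hJ0 (- 2%:R)); rewrite /la; acfield.
by rewrite hP (J_weight_zero hm mH h1 h2) addr0.
Qed.

(* Since all weights in J_M are +-1 and 2, 3 are invertible, J_M J_M lies in N_M. *)
Lemma UU_in_N k l : inN (mul (U k) (U l)).
Proof.
apply: (prod_in_N (U_J k) (U_J l) (al := 1) (be := 1)); rewrite ?scale1r ?U_H //.
- have -> : (1 - (1 + 1) : F) = -1 by ring.
  by rewrite oppr_eq0 oner_eq0.
- have -> : (-1 - (1 + 1) : F) = - 3%:R by ring.
  by rewrite oppr_eq0.
Qed.
Lemma UV_in_N k l : inN (mul (U k) (V l)).
Proof.
apply: (prod_in_N (U_J k) (V_J l) (al := 1) (be := -1)); rewrite ?scale1r ?scaleN1r ?U_H ?V_H //.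
- have -> : (1 - (1 + -1) : F) = 1 by ring.
  by rewrite oner_eq0.
- have -> : (-1 - (1 + -1) : F) = -1 by ring.
  by rewrite oppr_eq0 oner_eq0.
Qed.
Lemma VU_in_N k l : inN (mul (V k) (U l)).
Proof.
apply: (prod_in_N (V_J k) (U_J l) (al := -1) (be := 1)); rewrite ?scale1r ?scaleN1r ?U_H ?V_H //.
- have -> : (1 - (-1 + 1) : F) = 1 by ring.
  by rewrite oner_eq0.
- have -> : (-1 - (-1 + 1) : F) = -1 by ring.
  by rewrite oppr_eq0 oner_eq0.
Qed.
Lemma VV_in_N k l : inN (mul (V k) (V l)).
Proof.
apply: (prod_in_N (V_J k) (V_J l) (al := -1) (be := -1)); rewrite ?scaleN1r ?V_H //.
- have -> : (1 - (-1 + -1) : F) = 3%:R by ring.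
  exact: three.
- have -> : (-1 - (-1 + -1) : F) = 1 by ring.
  by rewrite oner_eq0.
Qed.

Lemma inN_sum (T : Type) (s : seq T) (f : T -> M) :
  (forall k, inN (f k)) -> inN (\sum_(k <- s) f k).
Proof.
move=> hf; elim: s => [|k s IH]; rewrite ?big_nil ?big_cons; first exact: inN0.
exact: inND.
Qed.

Lemma JJ_in_N x y : inJ x -> inJ y -> inN (mul x y).
Proof.
case/span => s [a [b ->]]; case/span => s' [a' [b' ->]].
rewrite prod_suml //; apply: inN_sum => k; rewrite prod_sumr //; apply: inN_sum => l.
rewrite prodDl !prodDr !prodZl !prodZr.
by apply: inND; apply: inND; apply: inNZ; apply: inNZ;
  [exact: UU_in_N | exact: UV_in_N | exact: VU_in_N | exact: VV_in_N].
Qed.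

(* u_k v_l = v_k u_l: the Malcev identity for (u_k, u_l, E, H), in which
   (u_k u_l)E, (v_k u_l)H and (u_k v_l)H are known from prodN_mul*. *)
Lemma uv_vu k l : mul (U k) (V l) = mul (V k) (U l).
Proof.
have hUUE := prodN_mulE (U_J k) (U_J l) (UU_in_N k l); rewrite !U_E in hUUE.
have hVUH : mul (mul (V k) (U l)) H = 0.
  by rewrite (prodN_mulH (V_J k) (U_J l) (VU_in_N k l)) V_H U_H; acfield.
have hUVH : mul (mul (U k) (V l)) H = 0.
  by rewrite (prodN_mulH (U_J k) (V_J l) (UV_in_N k l)) V_H U_H; acfield.
have hHU : mul H (U k) = - U k by rewrite prodC U_H.
have hEU : mul E (U k) = - V k by rewrite prodC U_E.
have h := mal (U k) (U l) E H.
rewrite ?(U_E, U_H, V_H, EH, hHU, hEU, prodNl, prodNr, prodDl, prodZl, hUUE, hVUH, hUVH,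
  prod0l, scaler0, oppr0) in h.
have h3 : (3%:R : F) *: (mul (U k) (V l) - mul (V k) (U l)) = 0.
  by apply: (add_relation h 2%:R); acfield.
by move/eqP: h3; rewrite scaler_eq0 (negbTE three) /= subr_eq0 => /eqP.
Qed.

Lemma weights_E i j :
  [/\ mul (mul (U i) (U j)) E = - mul (U i) (V j),
      mul (mul (U i) (V j)) E = - ((2%:R : F)^-1 *: mul (V i) (V j)) &
      mul (mul (V i) (V j)) E = 0].
Proof.
split.
- by rewrite (prodN_mulE (U_J i) (U_J j) (UU_in_N i j)) !U_E -(uv_vu i j); acfield.
- by rewrite (prodN_mulE (U_J i) (V_J j) (UV_in_N i j)) U_E V_E; acfield.
- by rewrite (prodN_mulE (V_J i) (V_J j) (VV_in_N i j)) !V_E; acfield.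
Qed.
Lemma weights_F i j :
  [/\ mul (mul (U i) (U j)) Fe = 0,
      mul (mul (U i) (V j)) Fe = (2%:R : F)^-1 *: mul (U i) (U j) &
      mul (mul (V i) (V j)) Fe = mul (U i) (V j)].
Proof.
split.
- by rewrite (prodN_mulF (U_J i) (U_J j) (UU_in_N i j)) !U_F; acfield.
- by rewrite (prodN_mulF (U_J i) (V_J j) (UV_in_N i j)) U_F V_F; acfield.
- by rewrite (prodN_mulF (V_J i) (V_J j) (VV_in_N i j)) !V_F prodNl prodNr -(uv_vu i j);
    acfield.
Qed.
Lemma weights_H i j :
  [/\ mul (mul (U i) (U j)) H = - mul (U i) (U j),
      mul (mul (U i) (V j)) H = 0 &
      mul (mul (V i) (V j)) H = mul (V i) (V j)].
Proof.
split.
- by rewrite (prodN_mulH (U_J i) (U_J j) (UU_in_N i j)) !U_H; acfield.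
- by rewrite (prodN_mulH (U_J i) (V_J j) (UV_in_N i j)) U_H V_H; acfield.
- by rewrite (prodN_mulH (V_J i) (V_J j) (VV_in_N i j)) !V_H; acfield.
Qed.

(* V_{2i} V_{2i} = 0: by uv_vu and anticommutativity 2 u_i v_i = 0. *)
Lemma square_zero i x y : in_span2 (U i) (V i) x -> in_span2 (U i) (V i) y -> mul x y = 0.
Proof.
move=> [a [b ->]] [c [d ->]].
have h2 : (2%:R : F) *: mul (U i) (V i) = 0.
  by apply: (add_relation (uv_vu i i) (-1)); acfield.
move/eqP: h2; rewrite scaler_eq0 (negbTE two) /= => /eqP uv0.
by apply: (add_relation uv0 (- (a * d - b * c))); acfield.
Qed.
End Sl2Modules.

Theorem lemmal3 (F : fieldType) (M : lmodType F) (mul : M -> M -> M)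
  (E H Fe : M) (I : eqType) (U V : I -> M) (i j : I) :
  (2%:R : F) != 0 -> (3%:R : F) != 0 ->
  in_variety_H mul ->
  is_sl2 mul E H Fe ->
  (* mL <> 0 for every nonzero m *)
  (forall m, m != 0 -> exists a, in_span3 E H Fe a /\ mul m a != 0) ->
  (* known fact: M = N_M (+) J_M *)
  (forall m, exists n x, [/\ in_N mul E H Fe n, in_J mul E H Fe x & m = n + x]) ->
  (forall m, in_N mul E H Fe m -> in_J mul E H Fe m -> m = 0) ->
  (* known fact: J_M = (+)_k V_{2k}, V_{2k} with standard basis {U k, V k} *)
  (forall k, in_J mul E H Fe (U k) /\ in_J mul E H Fe (V k)) ->
  (forall k, std_pair mul E H Fe (U k) (V k)) ->
  (forall x, in_J mul E H Fe x ->
     exists (s : seq I) (a b : I -> F), x = \sum_(k <- s) (a k *: U k + b k *: V k)) ->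
  (forall (s : seq I) (a b : I -> F), uniq s ->
     \sum_(k <- s) (a k *: U k + b k *: V k) = 0 ->
     forall k, k \in s -> a k = 0 /\ b k = 0) ->
  let ui := U i in let vi := V i in let uj := U j in let vj := V j in
  [/\ mul (mul ui uj) E = - mul ui vj,
      mul (mul ui vj) E = - ((2%:R : F)^-1 *: mul vi vj) &
      mul (mul vi vj) E = 0]
  /\ [/\ mul (mul ui uj) Fe = 0,
      mul (mul ui vj) Fe = (2%:R : F)^-1 *: mul ui uj &
      mul (mul vi vj) Fe = mul ui vj]
  /\ [/\ mul (mul ui uj) H = - mul ui uj,
      mul (mul ui vj) H = 0 &
      mul (mul vi vj) H = mul vi vj]
  /\ mul ui vj = mul vi uj
  /\ (forall x y a b, in_J mul E H Fe x -> in_J mul E H Fe y ->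
        in_span3 E H Fe a -> in_span3 E H Fe b ->
        jacobian mul (mul x y) a b = 0)
  /\ (i = j -> forall x y, in_span2 ui vi x -> in_span2 ui vi y -> mul x y = 0).
Proof.
move=> two three [[bil [ac mal]] _] [_ [EH FH EF]] _ decomp NJ0 UVJ std span _.
cbv zeta; split; first by eapply weights_E; eassumption.
split; first by eapply weights_F; eassumption.
split; first by eapply weights_H; eassumption.
split; first by eapply uv_vu; eassumption.
split; first by move=> x y a b hx hy; eapply JJ_in_N; eassumption.
by move=> _; eapply square_zero; eassumption.
Qed.
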